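(* Let $(S,d)$ be a connected metric space and $\bullet\in\{\mathrm{FM},\mathrm{BL}\}$. Then the set $J^S_\bullet$ consists of extreme points of $B^S_\bullet$ and is weak$^*$-dense in $\operatorname{ext}(B^S_\bullet)$.
   Context: $\mathrm{BL}(S)$ is the space of bounded real-valued Lipschitz functions on $S$, $|f|_L=\sup_{x\neq y}|f(x)-f(y)|/d(x,y)$, $\|f\|_{\mathrm{BL}}=\|f\|_\infty+|f|_L$, $\|f\|_{\mathrm{FM}}=\max(\|f\|_\infty,|f|_L)$, $B^S_\bullet=\{f\in\mathrm{BL}(S):\|f\|_\bullet\le1\}$, $\operatorname{ext}$ denotes the set of extreme points. For $f\in\mathrm{BL}(S)$, $M_f=\{x\in S:|f(x)|=\|f\|_\infty\}$. $J^S_{\mathrm{FM}}$ is the set of $f\in B^S_{\mathrm{FM}}$ with $\|f\|_\infty=1$ for which there is a finite non-empty $P_f\subset S$ such that for every $x\in S\setminus M_f$ there exists $p\in P_f$ with $|f(x)-f(p)|=d(x,p)$. $J^S_{\mathrm{BL}}=\{\mathbf{1},-\mathbf{1}\}\cup\hat J^S_{\mathrm{BL}}$, where $\hat J^S_{\mathrm{BL}}$ is the set of $f\in B^S_{\mathrm{BL}}$ with $\|f\|_{\mathrm{BL}}=1$, $f(M_f)=\{\|f\|_\infty,-\|f\|_\infty\}$, and for which there is a finite non-empty $P_f\subset S$ such that for every $x\in S\setminus M_f$ there exists $p\in P_f$ with $|f(x)-f(p)|=(1-\|f\|_\infty)d(x,p)$. The weak$^*$ topology on $\mathrm{BL}(S)$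 is $\sigma(\mathrm{BL}(S),X)$, where $X$ is the norm closure, in the dual of $(\mathrm{BL}(S),\|\cdot\|_\bullet)$, of the linear span of the point evaluations $f\mapsto f(x)$, $x\in S$. *)

From HB Require Import structures.
From mathcomp Require Import all_boot all_order all_algebra.
From mathcomp Require Import classical_sets boolp reals.
Set Implicit Arguments. Unset Strict Implicit. Unset Printing Implicit Defensive.
Import Order.TTheory GRing.Theory Num.Theory.
Local Open Scope ring_scope.
Local Open Scope classical_set_scope.

Record metric_space (R : realType) := MetricSpace {
  mcarrier :> Type;
  mdist : mcarrier -> mcarrier -> R;
  mdist_eq0 : forall x y, mdist x y = 0 <-> x = y;
  mdist_sym : forall x y, mdist x y = mdist y x;
  mdist_tri : forall x y z, mdist x z <= mdist x y + mdist y z }.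

Section Defs.
Variables (R : realType) (S : metric_space R).
Local Notation d := (@mdist R S).

Definition mopen (A : set S) : Prop :=
  forall x, A x -> exists e : R, 0 < e /\ forall y, d x y < e -> A y.
Definition mclosed (A : set S) : Prop := mopen (~` A).

Definition mconnected : Prop :=
  (exists x : S, True) /\
  forall A : set S, mopen A -> mclosed A -> A = set0 \/ A = setT.

Definition isBL (f : S -> R) : Prop :=
  (exists M : R, forall x, `|f x| <= M) /\
  (exists L : R, forall x y, `|f x - f y| <= L * d x y).

(* ||f||_oo  (sup of |f| ; the 0 makes it correct for empty S) *)
Definition supnorm (f : S -> R) : R :=
  sup [set r | r = 0 \/ exists x, r = `|f x|].

(* |f|_L  (sup over x <> y ; the 0 handles one-point spaces) *)
Definition lipconst (f : S -> R) : R :=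
  sup [set r | r = 0 \/ exists x y, x <> y /\ r = `|f x - f y| / d x y].

Inductive norm_kind := FM | BL.

Definition bnorm (k : norm_kind) (f : S -> R) : R :=
  match k with
  | FM => Num.max (supnorm f) (lipconst f)
  | BL => supnorm f + lipconst f
  end.

Definition ball1 (k : norm_kind) : set (S -> R) :=
  [set f | isBL f /\ bnorm k f <= 1].

Definition ext (C : set (S -> R)) : set (S -> R) :=
  [set f | C f /\ forall g h (t : R), C g -> C h -> 0 < t -> t < 1 ->
     f = (fun x => t * g x + (1 - t) * h x) -> g = h].

Definition Mset (f : S -> R) : set S := [set x | `|f x| = supnorm f].

Definition J_FM : set (S -> R) :=
  [set f | ball1 FM f /\ supnorm f = 1 /\
     exists (n : nat) (P : 'I_n.+1 -> S),
       forall x, ~ Mset f x -> exists i, `|f x - f (P i)| = d x (P i)].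

Definition Jhat_BL : set (S -> R) :=
  [set f | ball1 BL f /\ bnorm BL f = 1 /\
     f @` Mset f = [set y | y = supnorm f \/ y = - supnorm f] /\
     exists (n : nat) (P : 'I_n.+1 -> S),
       forall x, ~ Mset f x ->
         exists i, `|f x - f (P i)| = (1 - supnorm f) * d x (P i)].

Definition J_BL : set (S -> R) :=
  [set f | f = (fun _ => 1) \/ f = (fun _ => -1) \/ Jhat_BL f].

Definition Jset (k : norm_kind) : set (S -> R) :=
  match k with FM => J_FM | BL => J_BL end.

(* X: norm closure, in the dual of (BL(S), ||.||_k), of the span of the
   point evaluations.  phi (restricted to BL(S)) is in X iff for every e > 0
   there is a finite linear combination psi of point evaluations with
   |phi f - psi f| <= e * ||f||_k for all f in BL(S). *)
Definition inX (k : norm_kind) (phi : (S -> R) -> R) : Prop :=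
  forall e : R, 0 < e -> exists (m : nat) (a : 'I_m -> R) (p : 'I_m -> S),
    forall f, isBL f ->
      `|phi f - \sum_(i < m) a i * f (p i)| <= e * bnorm k f.

(* closure of A (a subset of BL(S)) in the weak* topology sigma(BL(S), X),
   via the basic neighbourhoods of f *)
Definition wstar_closure (k : norm_kind) (A : set (S -> R)) : set (S -> R) :=
  [set f | isBL f /\
     forall (n : nat) (phi : 'I_n -> ((S -> R) -> R)), (forall i, inX k (phi i)) ->
     forall e : R, 0 < e ->
       exists g, A g /\ forall i, `|phi i g - phi i f| < e].

End Defs.

From HB Require Import structures.
From mathcomp Require Import all_boot all_order all_algebra.
From mathcomp Require Import classical_sets boolp reals.
From mathcomp Require Import ring lra.
From Stdlib Require List.
Set Implicit Arguments.
Unset Strict Implicit.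
Unset Printing Implicit Defensive.
Import Order.TTheory GRing.Theory Num.Theory.
Local Open Scope ring_scope.
Local Open Scope classical_set_scope.

(* Everything rests on one rigidity fact: on a connected space a Lipschitz function
   with finitely many values is constant.

   J is contained in ext: write f = t g + (1 - t) h with g, h in the ball.  On M_f the
   values of g and h are forced to their extreme values, and at any other point x the
   equality |f x - f p| = (Lipschitz bound) d(x, p) forces g and h to have extremal
   slope between x and p as well.  Hence g - h (for FM), resp. an affine combination of
   g - h and f (for BL), takes its values in a finite set; being Lipschitz it is
   constant, and the norm constraints make g = h.

   Density: an extreme point f has ||f||_oo = 1 (FM), resp. ||f||_BL = 1 with f getting
   arbitrarily close to both ||f||_oo and -||f||_oo (BL).  Given finitely many points,
   the McShane extension of f from them (together with points where |f| is nearly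
   maximal), truncated at the sup norm, lies in J and agrees with f at those points.
   This suffices because each functional in X is, up to a small error on the unit
   ball, a finite combination of point evaluations. *)

Section ExtremePoints.
Variables (R : realType) (S : metric_space R).
Local Notation d := (@mdist R S).
Local Notation mconnected := (mconnected S).
Local Notation ball1 := (@ball1 R S).
Local Notation ext := (@ext R S).
Local Notation J_FM := (@J_FM R S).
Local Notation Jhat_BL := (@Jhat_BL R S).
Local Notation J_BL := (@J_BL R S).
Local Notation Jset := (@Jset R S).
Implicit Types (f g h u v : S -> R) (x y z : S).

Lemma mdist_xx x : d x x = 0.
Proof. exact/(mdist_eq0 x x). Qed.

Lemma mdist_ge0 x y : 0 <= d x y.
Proof. have := mdist_tri x y x; rewrite mdist_xx (mdist_sym y x); lra. Qed.

Lemma mdist_gt0 x y : x <> y -> 0 < d x y.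
Proof. by move=> xy; rewrite lt_def mdist_ge0 andbT; apply/eqP => /mdist_eq0. Qed.

Definition lipschitz (K : R) u := forall x y, `|u x - u y| <= K * d x y.

Lemma lipschitzW K K' u : K <= K' -> lipschitz K u -> lipschitz K' u.
Proof. by move=> KK' uK x y; apply: le_trans (uK x y) _; rewrite ler_wpM2r ?mdist_ge0. Qed.

Lemma lipschitzN K u : lipschitz K u -> lipschitz K (fun x => - u x).
Proof. by move=> uK x y; rewrite -opprD normrN. Qed.

Lemma lipschitz_affine K u (a b : R) :
  lipschitz K u -> lipschitz (`|a| * K) (fun x => a * u x + b).
Proof.
move=> uK x y; rewrite opprD addrACA subrr addr0 -mulrBr normrM -mulrA.
by rewrite ler_wpM2l.
Qed.

Lemma lipschitz_comb K1 K2 u v (a b : R) : lipschitz K1 u -> lipschitz K2 v ->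
  lipschitz (`|a| * K1 + `|b| * K2) (fun x => a * u x + b * v x).
Proof.
move=> uK vK x y.
have -> : a * u x + b * v x - (a * u y + b * v y) = a * (u x - u y) + b * (v x - v y).
  by ring.
apply: le_trans (ler_normD _ _) _; rewrite !normrM mulrDl -!mulrA.
by apply: lerD; rewrite ler_wpM2l.
Qed.

Lemma seq_gap (s : seq R) (a : R) :
  exists2 e, 0 < e & forall r, r \in s -> r != a -> e <= `|r - a|.
Proof.
elim: s => [|r s [e e0 se]]; first by exists 1 => // r; rewrite in_nil.
have [ra|ra] := eqVneq r a.
  by exists e => // r'; rewrite inE => /orP[/eqP ->|/se//]; rewrite ra eqxx.
exists (Num.min e `|r - a|); first by rewrite lt_min e0 normr_gt0 subr_eq0.
move=> r'; rewrite inE => /orP[/eqP -> _|r's r'a]; first by rewrite ge_min lexx orbT.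
by rewrite ge_min se.
Qed.

Lemma lipschitz_finite_range_locally_constant K u (s : seq R) :
  lipschitz K u -> (forall x, u x \in s) ->
  forall z, exists2 e, 0 < e & forall y, d z y < e -> u y = u z.
Proof.
move=> uK us z; have [e e0 se] := seq_gap s (u z).
have K1 : 0 < `|K| + 1 by rewrite ltr_pwDr ?normr_ge0.
exists (e / (`|K| + 1)); first exact: divr_gt0.
move=> y; rewrite ltr_pdivlMr // => dzy; apply/eqP; apply: contraLR dzy => uyz.
have := se _ (us y) uyz; have := uK z y; rewrite distrC.
have := ler_norm K; have := mdist_ge0 z y; rewrite -leNgt; nra.
Qed.

Lemma lipschitz_finite_range_constant K u (s : seq R) n (P : 'I_n -> S) :
  mconnected -> lipschitz K u ->
  (forall x, u x \in s \/ exists i, u x = u (P i)) -> forall x y, u x = u y.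
Proof.
move=> [_ clopen] uK us x y.
have uval z : u z \in s ++ [seq u (P i) | i <- enum 'I_n].
  rewrite mem_cat; case: (us z) => [->//|[i ->]].
  by rewrite (map_f (fun i => u (P i))) ?mem_enum ?orbT.
have loc := lipschitz_finite_range_locally_constant uK uval.
pose A := [set z | u z = u x].
have Aopen : mopen A.
  move=> z Az; have [e e0 He] := loc z; exists e; split => // w /He uwz.
  by rewrite /A /= uwz.
have Aclosed : mclosed A.
  move=> z Az; have [e e0 He] := loc z; exists e; split => // w /He uwz Aw.
  by apply: Az; rewrite /A /= -uwz.
have [A0|AT] := clopen A Aopen Aclosed.
  by have : A x by []; rewrite A0.
by have : A y by rewrite AT.
Qed.

Lemma supnorm_has_sup f : isBL f -> has_sup [set r | r = 0 \/ exists x, r = `|f x|].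
Proof.
move=> [[M fM] _]; split; first by exists 0; left.
by exists `|M| => r [->|[x ->]]; [exact: normr_ge0|exact: le_trans (fM x) (ler_norm M)].
Qed.

Lemma supnorm_ge0 f : isBL f -> 0 <= supnorm f.
Proof. by move=> /supnorm_has_sup fs; apply: sup_upper_bound => //; left. Qed.

Lemma ler_supnorm f x : isBL f -> `|f x| <= supnorm f.
Proof. by move=> /supnorm_has_sup fs; apply: sup_upper_bound => //; right; exists x. Qed.

Lemma supnorm_le f B : 0 <= B -> (forall x, `|f x| <= B) -> supnorm f <= B.
Proof. by move=> B0 fB; apply: ge_sup; [exists 0; left|move=> r [->|[x ->]]]. Qed.

Lemma supnorm_approx f x0 eta : isBL f -> 0 < eta -> exists x, supnorm f - eta < `|f x|.
Proof.
move=> /supnorm_has_sup fs eta0.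
have [r [->|[x ->]] lt_r] := sup_adherent eta0 fs; last by exists x.
by exists x0; apply: lt_le_trans lt_r (normr_ge0 _).
Qed.

Lemma lipconst_has_sup f : isBL f ->
  has_sup [set r | r = 0 \/ exists x y, x <> y /\ r = `|f x - f y| / d x y].
Proof.
move=> [_ [L fL]]; split; first by exists 0; left.
exists `|L| => r [->|[x [y [xy ->]]]]; first exact: normr_ge0.
rewrite ler_pdivrMr ?mdist_gt0 //; apply: le_trans (fL x y) _.
by rewrite ler_wpM2r ?mdist_ge0 ?ler_norm.
Qed.

Lemma lipconst_ge0 f : isBL f -> 0 <= lipconst f.
Proof. by move=> /lipconst_has_sup fs; apply: sup_upper_bound => //; left. Qed.

Lemma ler_lipconst f x y : isBL f -> x <> y -> `|f x - f y| / d x y <= lipconst f.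
Proof. by move=> /lipconst_has_sup fs xy; apply: sup_upper_bound => //; right; exists x, y. Qed.

Lemma lipconst_lipschitz f : isBL f -> lipschitz (lipconst f) f.
Proof.
move=> fBL x y; case: (pselect (x = y)) => [<-|xy].
  by rewrite subrr normr0 mdist_xx mulr0.
by rewrite -ler_pdivrMr ?mdist_gt0 ?ler_lipconst.
Qed.

Lemma lipconst_le f K : 0 <= K -> lipschitz K f -> lipconst f <= K.
Proof.
move=> K0 fK; apply: ge_sup; first by exists 0; left.
by move=> r [->|[x [y [xy ->]]]] //; rewrite ler_pdivrMr ?mdist_gt0.
Qed.

Lemma ball1_FMP g : ball1 FM g <-> (forall x, `|g x| <= 1) /\ lipschitz 1 g.
Proof.
split=> [[gBL]|[g1 gL]]; rewrite /bnorm ?ge_max.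
  move=> /andP[s1 l1]; split; first by move=> x; exact: le_trans (ler_supnorm x gBL) s1.
  exact: lipschitzW l1 (lipconst_lipschitz gBL).
split; first by split; [exists 1|exists 1].
by rewrite /bnorm ge_max supnorm_le ?lipconst_le.
Qed.

Lemma ball1_BL_bounds g : ball1 BL g ->
  [/\ 0 <= supnorm g <= 1, forall x, `|g x| <= supnorm g & lipschitz (1 - supnorm g) g].
Proof.
move=> [gBL]; rewrite /bnorm => gb.
have s0 := supnorm_ge0 gBL; have l0 := lipconst_ge0 gBL.
split; [apply/andP; split; lra|by move=> x; exact: ler_supnorm|].
by apply: lipschitzW (lipconst_lipschitz gBL); lra.
Qed.

Lemma ball1_BL_of g A K : 0 <= A -> 0 <= K -> A + K <= 1 ->
  (forall x, `|g x| <= A) -> lipschitz K g -> ball1 BL g.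
Proof.
move=> A0 K0 AK gA gK; split; first by split; [exists A|exists K].
by rewrite /bnorm; have := supnorm_le A0 gA; have := lipconst_le K0 gK; lra.
Qed.

Lemma ball1_const k (c : R) : `|c| <= 1 -> ball1 k (fun _ => c).
Proof.
move=> c1; have cL : lipschitz 0 (fun _ : S => c).
  by move=> x y; rewrite subrr normr0 mul0r.
case: k; first by apply/ball1_FMP; split => // x y; rewrite subrr normr0 mul1r mdist_ge0.
by apply: ball1_BL_of cL; rewrite ?normr_ge0 ?addr0.
Qed.

Lemma supnormN f : supnorm (fun x => - f x) = supnorm f.
Proof.
by congr sup; rewrite predeqE => r /=; split=> -[->|[x ->]];
  [left|right; exists x; rewrite normrN|left|right; exists x; rewrite normrN].
Qed.

Lemma lipconstN f : lipconst (fun x => - f x) = lipconst f.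
Proof.
congr sup; rewrite predeqE => r /=; split=> -[->|[x [y [xy ->]]]];
  by [left|right; exists x, y; rewrite -opprD normrN].
Qed.

Lemma ball1N k f : ball1 k f -> ball1 k (fun x => - f x).
Proof.
move=> [[[M fM] [L fL]] fb]; split; last by case: k fb; rewrite /bnorm supnormN lipconstN.
by split; [exists M => x; rewrite normrN|exists L; exact: lipschitzN].
Qed.

Lemma extN k f : ext (ball1 k) f -> ext (ball1 k) (fun x => - f x).
Proof.
move=> [fb fext]; split=> [|g h t gb hb t0 t1 fE]; first exact: ball1N.
have fE' : f = (fun x => t * - g x + (1 - t) * - h x).
  by apply: funext => x; rewrite -[f x]opprK (congr1 (fun F => F x) fE); ring.
have := fext _ _ _ (ball1N gb) (ball1N hb) t0 t1 fE'.
move=> gh; apply: funext => x; have /= := congr1 (fun F => F x) gh; lra.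
Qed.

Lemma convex_norm_extremal (t A B a b : R) : 0 < t < 1 -> `|A| <= a -> `|B| <= b ->
  `|t * A + (1 - t) * B| = t * a + (1 - t) * b ->
  (A = a /\ B = b) \/ (A = - a /\ B = - b).
Proof.
move=> /andP[t0 t1]; rewrite !ler_norml => /andP[a1 a2] /andP[b1 b2].
have [AB0|AB0] := lerP 0 (t * A + (1 - t) * B).
  by rewrite ger0_norm // => E; left; split; nra.
by rewrite ltr0_norm // => E; right; split; nra.
Qed.

Lemma convex_norm_margin (t A c : R) : 0 < t < 1 -> `|A| <= 1 -> `|A + c| <= 1 ->
  `|A + t * c| <= 1 - t * (1 - t) * `|c|.
Proof.
move=> /andP[t0 t1]; rewrite !ler_norml => /andP[a1 a2] /andP[b1 b2].
have [c0|c0] := lerP 0 c; [rewrite ger0_norm|rewrite ltr0_norm] => //.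
  have : 0 <= (1 - t) ^+ 2 * c by rewrite mulr_ge0 ?sqr_ge0.
  have : 0 <= t ^+ 2 * c by rewrite mulr_ge0 ?sqr_ge0.
  by move=> ? ?; apply/andP; split; nra.
have c0' : 0 <= - c by rewrite oppr_ge0 ltW.
have : 0 <= (1 - t) ^+ 2 * - c by rewrite mulr_ge0 ?sqr_ge0.
have : 0 <= t ^+ 2 * - c by rewrite mulr_ge0 ?sqr_ge0.
by move=> ? ?; apply/andP; split; nra.
Qed.

Lemma J_FM_ext f : mconnected -> J_FM f -> ext (ball1 FM) f.
Proof.
move=> Sconn [fb [f1 [n [P fP]]]]; split => // g h t gb hb t0 t1 fE.
have t01 : 0 < t < 1 by rewrite t0 t1.
have [[g1 gL] [h1 hL]] := (proj1 (ball1_FMP g) gb, proj1 (ball1_FMP h) hb).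
have fx x : f x = t * g x + (1 - t) * h x by rewrite fE.
pose u x := g x - h x.
have uM x : Mset f x -> u x = 0.
  rewrite /Mset /= f1 fx => fx1.
  have := convex_norm_extremal t01 (g1 x) (h1 x); rewrite fx1.
  have -> : t * 1 + (1 - t) * 1 = 1 by ring.
  by rewrite /u => /(_ erefl) [] [-> ->]; rewrite subrr.
have uP x : ~ Mset f x -> exists i, u x = u (P i).
  move=> /fP [i fxi]; exists i; apply/eqP; rewrite /u -subr_eq0 opprD addrACA -opprD subr_eq0.
  have := convex_norm_extremal t01 (gL x (P i)) (hL x (P i)).
  have -> : t * (g x - g (P i)) + (1 - t) * (h x - h (P i)) = f x - f (P i) by rewrite !fx; ring.
  have -> : t * (1 * d x (P i)) + (1 - t) * (1 * d x (P i)) = d x (P i) by ring.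
  by rewrite fxi => /(_ erefl) [] [-> ->].
have uL : lipschitz (`|1| * 1 + `|-1| * 1) u.
  by move=> x y; have := lipschitz_comb 1 (-1) gL hL x y; rewrite !mul1r !mulN1r.
have uconst := lipschitz_finite_range_constant (s := [:: 0]) (P := P) Sconn uL.
have [[x0 _] _] := Sconn.
have ux x : u x = u x0.
  apply: uconst => y; have [/uM ->|/uP] := pselect (Mset f y); by [left; rewrite inE|right].
suff ux0 : u x0 = 0 by apply: funext => x; apply/eqP; rewrite -subr_eq0 -/(u x) ux ux0.
apply/eqP; apply: contraT => ux0.
have margin0 : 0 < t * (1 - t) * `|u x0| by rewrite !mulr_gt0 ?normr_gt0 ?subr_gt0.
have margin x : `|f x| <= 1 - t * (1 - t) * `|u x0|.
  have -> : f x = h x + t * u x by rewrite fx /u; ring.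
  rewrite -(ux x) convex_norm_margin // /u.
  by rewrite addrC subrK.
have := supnorm_le _ margin; rewrite f1; have := margin x0; have := normr_ge0 (f x0); lra.
Qed.

Lemma lipschitz_slope_attained K L c u n (P : 'I_n -> S) :
  mconnected -> lipschitz K u ->
  (forall x, `|u x| <> c -> exists i, `|u x - u (P i)| = L * d x (P i)) ->
  forall x1 x2, u x1 <> u x2 -> exists x y, x <> y /\ `|u x - u y| = L * d x y.
Proof.
move=> Sconn uK uP x1 x2; apply: contra_notP => noslope.
apply: (lipschitz_finite_range_constant (s := [:: c; - c]) (P := P) Sconn uK) => x.
have [uxc|/uP [i uxi]] := pselect (`|u x| = c).
  left; rewrite !inE -uxc; have [ux0|ux0] := lerP 0 (u x).
    by rewrite ger0_norm ?eqxx.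
  by rewrite ltr0_norm ?opprK ?eqxx ?orbT.
right; exists i; case: (pselect (x = P i)) => [<-//|xPi].
by exfalso; apply: noslope; exists x, (P i).
Qed.

Lemma Jhat_BL_supnorm f : Jhat_BL f ->
  [/\ 0 < supnorm f < 1, lipconst f = 1 - supnorm f
    & exists x1 x2, f x1 = supnorm f /\ f x2 = - supnorm f].
Proof.
move=> [[fBL _] [fb [fM _]]]; set s := supnorm f in fb fM *.
have [x1 _ fx1] : (f @` Mset f) s by rewrite fM; left.
have [x2 _ fx2] : (f @` Mset f) (- s) by rewrite fM; right.
have lf : lipconst f = 1 - s by move: fb; rewrite /bnorm /= -/s; lra.
have s0 : 0 < s.
  rewrite ltNge; apply/negP => s0.
  have f0 : lipschitz 0 f.
    move=> x y; rewrite mul0r normr_le0 subr_eq0; apply/eqP.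
    have := ler_supnorm x fBL; have := ler_supnorm y fBL.
    by rewrite -/s !ler_norml => /andP[? ?] /andP[? ?]; lra.
  by have := lipconst_le (lexx 0) f0; rewrite lf; lra.
have s1 : s < 1.
  rewrite ltNge; apply/negP => s1.
  have := lipconst_lipschitz fBL x1 x2; rewrite lf fx1 fx2 opprK.
  by rewrite ger0_norm; have := mdist_ge0 x1 x2; nra.
by split => //; [rewrite s0 | exists x1, x2].
Qed.

Lemma Jhat_BL_supnorm_convex f g h t : mconnected -> Jhat_BL f ->
  ball1 BL g -> ball1 BL h -> 0 < t < 1 -> (forall x, f x = t * g x + (1 - t) * h x) ->
  supnorm f = t * supnorm g + (1 - t) * supnorm h.
Proof.
move=> Sconn Jf gb hb /andP[t0 t1] fx.
have [/andP[s0 _] lf [x1 [x2 [fx1 fx2]]]] := Jhat_BL_supnorm Jf.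
move: Jf => [[fBL _] [_ [_ [n [P fP]]]]].
have fL : lipschitz (1 - supnorm f) f by rewrite -lf; exact: lipconst_lipschitz.
have [_ ga gL] := ball1_BL_bounds gb; have [_ hb' hL] := ball1_BL_bounds hb.
set s := supnorm f in s0 fx1 fx2 fL fP *.
set a := supnorm g in ga gL *; set b := supnorm h in hb' hL *.
apply/eqP; rewrite eq_le; apply/andP; split.
  have := ga x1; have := hb' x1; rewrite -fx1 fx !ler_norml => /andP[_ ?] /andP[_ ?].
  by nra.
have [x [y [xy fxy]]] := lipschitz_slope_attained Sconn fL fP (x1 := x1) (x2 := x2) ltac:(lra).
have dxy := mdist_gt0 xy.
have : `|f x - f y| <= t * ((1 - a) * d x y) + (1 - t) * ((1 - b) * d x y).
  have -> : f x - f y = t * (g x - g y) + (1 - t) * (h x - h y) by rewrite !fx; ring.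
  have t1' : 0 < 1 - t by rewrite subr_gt0.
  apply: le_trans (ler_normD _ _) _; rewrite !normrM (gtr0_norm t0) (gtr0_norm t1').
  by apply: lerD; apply: ler_wpM2l; by [exact: ltW|exact: gL|exact: hL].
by rewrite fxy; nra.
Qed.

Lemma Jhat_BL_ext f : mconnected -> Jhat_BL f -> ext (ball1 BL) f.
Proof.
move=> Sconn Jf; have [/andP[s0 s1] lf [x1 [x2 [fx1 fx2]]]] := Jhat_BL_supnorm Jf.
split=> [|g h t gb hb t0 t1 fE]; first exact: Jf.1.
have t01 : 0 < t < 1 by rewrite t0 t1.
have fx x : f x = t * g x + (1 - t) * h x by rewrite fE.
have s_conv := Jhat_BL_supnorm_convex Sconn Jf gb hb t01 fx.
move: Jf => [fb [_ [_ [n [P fP]]]]].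
have fL : lipschitz (1 - supnorm f) f by rewrite -lf; exact/lipconst_lipschitz/(proj1 fb).
have [_ ga gL] := ball1_BL_bounds gb; have [_ hb' hL] := ball1_BL_bounds hb.
set s := supnorm f in s0 s1 fx1 fx2 fL fP s_conv *.
set a := supnorm g in ga gL s_conv *; set b := supnorm h in hb' hL s_conv *.
have fM_gh x : Mset f x -> (g x = a /\ h x = b /\ f x = s) \/ (g x = - a /\ h x = - b /\ f x = - s).
  move=> Mx; have := convex_norm_extremal t01 (ga x) (hb' x); rewrite -fx -s_conv Mx.
  by move=> /(_ erefl) [] [gx hx]; [left|right]; rewrite fx gx hx s_conv; do ![split => //]; ring.
(* [w] takes equal values at both ends of every slope pair of [f],
   and the values [a - b], [b - a] on [M_f]. *)
pose w x := (1 - s) * (g x - h x) - (b - a) * f x.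
have wL : lipschitz (`|1 - s| * (`|1| * (1 - a) + `|-1| * (1 - b)) + `|- (b - a)| * (1 - s)) w.
  have -> : w = fun x => (1 - s) * (1 * g x + -1 * h x) + - (b - a) * f x.
    by apply: funext => x; rewrite /w; ring.
  exact: lipschitz_comb (lipschitz_comb _ _ gL hL) fL.
have wM x : Mset f x -> w x = a - b \/ w x = b - a.
  by rewrite /w => /fM_gh [] [-> [-> ->]]; [left|right]; ring.
have wP x : ~ Mset f x -> exists i, w x = w (P i).
  move=> /fP [i fxi]; exists i; apply/eqP; rewrite /w -subr_eq0.
  have := convex_norm_extremal t01 (gL x (P i)) (hL x (P i)).
  have -> : t * (g x - g (P i)) + (1 - t) * (h x - h (P i)) = f x - f (P i) by rewrite !fx; ring.
  have -> : t * ((1 - a) * d x (P i)) + (1 - t) * ((1 - b) * d x (P i)) = (1 - s) * d x (P i).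
    by rewrite s_conv; ring.
  rewrite fxi => /(_ erefl) [] [gxP hxP]; rewrite !fx; apply/eqP;
    by rewrite -[g x](subrK (g (P i))) -[h x](subrK (h (P i))) gxP hxP s_conv; ring.
have wconst := lipschitz_finite_range_constant (s := [:: a - b; b - a]) (P := P) Sconn wL.
have wx x y : w x = w y.
  apply: wconst => z; have [/wM|/wP] := pselect (Mset f z); last by right.
  by case=> ->; left; rewrite !inE eqxx ?orbT.
have Mx1 : Mset f x1 by rewrite /Mset /= fx1 gtr0_norm.
have Mx2 : Mset f x2 by rewrite /Mset /= fx2 normrN gtr0_norm.
have w1 : w x1 = a - b.
  by case: (fM_gh x1 Mx1) => [[gx [hx _]]|[_ [_ fx1']]]; [rewrite /w gx hx fx1; ring|lra].
have w2 : w x2 = b - a.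
  by case: (fM_gh x2 Mx2) => [[_ [_ fx2']]|[gx [hx _]]]; [lra|rewrite /w gx hx fx2; ring].
have ab : a = b by have := wx x1 x2; rewrite w1 w2; lra.
apply: funext => x; have := wx x x1; rewrite w1 /w ab !subrr mul0r subr0 => /eqP.
by rewrite mulf_eq0 subr_eq0 => /orP[/eqP|/eqP //]; lra.
Qed.

Lemma const_BL_ext (c : R) : `|c| = 1 -> ext (ball1 BL) (fun _ => c).
Proof.
move=> c1; split=> [|g h t gb hb t0 t1 cE]; first by apply: ball1_const; rewrite c1.
have [[/andP[_ a1] ga _] [/andP[_ b1] hb' _]] := (ball1_BL_bounds gb, ball1_BL_bounds hb).
have t01 : 0 < t < 1 by rewrite t0 t1.
apply: funext => x; have /= cx := congr1 (fun F => F x) cE.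
have := convex_norm_extremal t01 (le_trans (ga x) a1) (le_trans (hb' x) b1).
rewrite -cx c1; have -> : t * 1 + (1 - t) * 1 = 1 by ring.
by move=> /(_ erefl) [] [-> ->].
Qed.

Lemma Jset_ext k : mconnected -> Jset k `<=` ext (ball1 k).
Proof.
move=> Sconn; case: k => f /=; first exact: J_FM_ext.
case=> [->|[->|]]; last exact: Jhat_BL_ext.
  by apply: const_BL_ext; rewrite normr1.
by apply: const_BL_ext; rewrite normrN normr1.
Qed.

Definition clamp (c y : R) := if y < - c then - c else if c < y then c else y.

Lemma clampP (c y : R) : 0 <= c ->
  [\/ y < - c /\ clamp c y = - c, c < y /\ clamp c y = c | - c <= y <= c /\ clamp c y = y].
Proof.
move=> c0; rewrite /clamp; case: (ltrP y (- c)) => [|cy]; first by constructor 1.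
by case: (ltrP c y) => [|yc]; [constructor 2|constructor 3].
Qed.

Lemma clamp_norm_le (c y : R) : 0 <= c -> `|clamp c y| <= c.
Proof.
by move=> c0; rewrite ler_norml; case: (clampP y c0) => [[? ->]|[? ->]|[/andP[? ?] ->]];
  apply/andP; split; lra.
Qed.

Lemma clamp_id (c y : R) : - c <= y <= c -> clamp c y = y.
Proof.
move=> /andP[cy yc]; have c0 : 0 <= c by lra.
by case: (clampP y c0) => [[? ->]|[? ->]|[_ ->]] //; lra.
Qed.

Lemma clamp_dist (c y z : R) : 0 <= c -> `|clamp c y - clamp c z| <= `|y - z|.
Proof.
move=> c0; have [yz|yz] := lerP 0 (y - z); [rewrite (ger0_norm yz)|rewrite (ltr0_norm yz)];
  rewrite ler_norml; case: (clampP y c0) => [[? ->]|[? ->]|[/andP[? ?] ->]];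
  by case: (clampP z c0) => [[? ->]|[? ->]|[/andP[? ?] ->]]; apply/andP; split; lra.
Qed.

Lemma ler_clamp (c y z : R) : 0 <= c -> y <= z -> clamp c y <= clamp c z.
Proof.
move=> c0 yz; case: (clampP y c0) => [[? ->]|[? ->]|[/andP[? ?] ->]];
  by case: (clampP z c0) => [[? ->]|[? ->]|[/andP[? ?] ->]]; lra.
Qed.

Lemma clamp_interior (c y : R) : 0 <= c -> `|clamp c y| < c -> clamp c y = y.
Proof.
by move=> c0; case: (clampP y c0) => [[_ ->]|[_ ->]|[_ ->]] //;
  rewrite ?normrN ger0_norm // ltxx.
Qed.

Lemma clamp_near (c y eta : R) : 0 <= c -> 0 <= eta -> `|y| <= c + eta ->
  `|clamp c y - y| <= eta.
Proof.
move=> c0 eta0; rewrite !ler_norml => /andP[? ?].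
by case: (clampP y c0) => [[? ->]|[? ->]|[/andP[? ?] ->]]; apply/andP; split; lra.
Qed.

Lemma clamp_top (c y : R) : 0 <= c -> c < y -> clamp c y = c.
Proof. by move=> c0 cy; case: (clampP y c0) => [[? ->]|[? ->]|[/andP[? ?] ->]] //; lra. Qed.

Lemma clamp_bot (c y : R) : 0 <= c -> y < - c -> clamp c y = - c.
Proof. by move=> c0 yc; case: (clampP y c0) => [[? ->]|[? ->]|[/andP[? ?] ->]] //; lra. Qed.

Section McShane.
Variables (L c : R) (v : S -> R) (n : nat) (P : 'I_n.+1 -> S).
Hypotheses (L0 : 0 <= L) (c0 : 0 <= c) (vL : lipschitz L v) (vc : forall x, `|v x| <= c).

Definition mcshane_index x : 'I_n.+1 :=
  [arg min_(i < ord0) (v (P i) + L * d x (P i))]%O.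

Definition mcshane x := v (P (mcshane_index x)) + L * d x (P (mcshane_index x)).

Definition mcshane_clamped x := clamp c (mcshane x).

Lemma mcshane_le x i : mcshane x <= v (P i) + L * d x (P i).
Proof. by rewrite /mcshane /mcshane_index; case: arg_minP => // j _; apply. Qed.

Lemma ler_mcshane x : v x <= mcshane x.
Proof. by have := vL x (P (mcshane_index x)); rewrite /mcshane ler_norml; lra. Qed.

Lemma mcshane_P i : mcshane (P i) = v (P i).
Proof.
apply/eqP; rewrite eq_le ler_mcshane andbT.
by have := mcshane_le (P i) i; rewrite mdist_xx mulr0 addr0.
Qed.

Lemma mcshane_lipschitz : lipschitz L mcshane.
Proof.
have le_mcshane x y : mcshane x <= mcshane y + L * d x y.
  apply: le_trans (mcshane_le x (mcshane_index y)) _; rewrite /mcshane -addrA lerD2l.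
  by rewrite -mulrDr ler_wpM2l // addrC mdist_tri.
by move=> x y; rewrite ler_norml; have := le_mcshane y x; rewrite mdist_sym;
  have := le_mcshane x y; lra.
Qed.

Lemma mcshane_clamped_norm_le x : `|mcshane_clamped x| <= c.
Proof. exact: clamp_norm_le. Qed.

Lemma mcshane_clamped_lipschitz : lipschitz L mcshane_clamped.
Proof. by move=> x y; apply: le_trans (clamp_dist _ _ c0) (mcshane_lipschitz x y). Qed.

Lemma mcshane_clamped_P i : mcshane_clamped (P i) = v (P i).
Proof. by rewrite /mcshane_clamped mcshane_P clamp_id // -ler_norml. Qed.

Lemma ler_mcshane_clamped x : v x <= mcshane_clamped x.
Proof.
have vx : - c <= v x <= c by rewrite -ler_norml.
by rewrite -(clamp_id vx) ler_clamp ?ler_mcshane.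
Qed.

Lemma mcshane_clamped_slope x : `|mcshane_clamped x| < c ->
  exists i, `|mcshane_clamped x - mcshane_clamped (P i)| = L * d x (P i).
Proof.
move=> /(clamp_interior c0) Gx; exists (mcshane_index x).
rewrite mcshane_clamped_P /mcshane_clamped Gx /mcshane addrAC subrr add0r.
by rewrite ger0_norm ?mulr_ge0 ?mdist_ge0.
Qed.

End McShane.

Lemma J_FM_of G n (P : 'I_n.+1 -> S) : (forall x, `|G x| <= 1) -> lipschitz 1 G ->
  (forall eta, 0 < eta -> exists x, 1 - eta < `|G x|) ->
  (forall x, `|G x| < 1 -> exists i, `|G x - G (P i)| = d x (P i)) ->
  J_FM G.
Proof.
move=> G1 GL Gsup GP; have Gb : ball1 FM G by apply/ball1_FMP.
have s1 : supnorm G = 1.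
  apply/eqP; rewrite eq_le supnorm_le //=; rewrite leNgt; apply/negP => s1.
  have [x Gx] := Gsup (1 - supnorm G) ltac:(lra).
  by have := ler_supnorm x (proj1 Gb); lra.
split=> //; split=> //; exists n, P => x Mx; apply: GP.
by rewrite lt_neqAle G1 andbT; apply/eqP; rewrite -s1.
Qed.

Lemma Jhat_BL_of G s n (P : 'I_n.+1 -> S) : mconnected -> 0 < s <= 1 ->
  (forall x, `|G x| <= s) -> lipschitz (1 - s) G ->
  (exists x, G x = s) -> (exists x, G x = - s) ->
  (forall x, `|G x| < s -> exists i, `|G x - G (P i)| = (1 - s) * d x (P i)) ->
  Jhat_BL G.
Proof.
move=> Sconn /andP[s0 s1] Gs GL [xp Gxp] [xm Gxm] GP.
have GBL : isBL G by split; [exists s|exists (1 - s)].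
have sG : supnorm G = s.
  have := ler_supnorm xp GBL; rewrite Gxp ger0_norm => [sG|]; last exact: ltW.
  by apply/eqP; rewrite eq_le sG supnorm_le //; exact: ltW.
have GP' x : `|G x| <> s -> exists i, `|G x - G (P i)| = (1 - s) * d x (P i).
  by move=> Gxs; apply: GP; rewrite lt_neqAle Gs andbT; apply/eqP.
have lG : lipconst G = 1 - s.
  apply/eqP; rewrite eq_le lipconst_le ?subr_ge0 //=.
  have [x [y [xy Gxy]]] := lipschitz_slope_attained Sconn GL GP' (x1 := xp) (x2 := xm) ltac:(lra).
  by have := ler_lipconst GBL xy; rewrite Gxy mulfK // gt_eqF ?mdist_gt0.
have bG : bnorm BL G = 1 by rewrite /bnorm /= sG lG; ring.
split; first by split; rewrite ?bG.
split=> //; rewrite sG; split; last first.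
  exists n, P => x Mx; apply: GP; rewrite lt_neqAle Gs andbT; apply/eqP.
  by move: Mx; rewrite /Mset /= sG.
rewrite predeqE => y; split.
  move=> [x]; rewrite /Mset /= sG => Gx <-.
  have [G0|G0] := lerP 0 (G x); first by left; rewrite -Gx ger0_norm.
  by right; rewrite -Gx ltr0_norm // opprK.
by case=> ->; [exists xp|exists xm]; rewrite /Mset /= ?Gxp ?Gxm ?normrN ?sG ?gtr0_norm.
Qed.

Lemma ext_midpoint (C : set (S -> R)) f g h : ext C f -> C g -> C h ->
  (forall x, f x = (g x + h x) / 2) -> g = h.
Proof.
move=> [_ fext] Cg Ch fgh; apply: (fext _ _ 2^-1) => //.
- by rewrite invr_gt0.
- by rewrite invf_lt1 ?ltr1n.
- by apply: funext => x; rewrite fgh; field.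
Qed.

Lemma ext_FM_supnorm x0 f : ext (ball1 FM) f -> supnorm f = 1.
Proof.
move=> fext; have [f1 fL] := proj1 (ball1_FMP f) fext.1.
have fBL := fext.1.1; have sf x := ler_supnorm x fBL.
apply/eqP; rewrite eq_le supnorm_le //=; rewrite leNgt; apply/negP => s1.
pose ep := 1 - supnorm f.
have shift_ball (a : R) : `|a| <= ep -> ball1 FM (fun x => f x + a).
  move=> aep; apply/ball1_FMP; split; last by move=> x y; rewrite opprD addrACA subrr addr0.
  by move=> x; apply: le_trans (ler_normD _ _) _; have := sf x; move: aep; rewrite /ep; lra.
have ep0 : 0 < ep by rewrite subr_gt0.
have [epP epN] : `|ep| <= ep /\ `|- ep| <= ep by rewrite normrN gtr0_norm.
have mid x : f x = (f x + ep + (f x + - ep)) / 2 by field.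
have /(congr1 (fun F => F x0)) /= := ext_midpoint fext (shift_ball _ epP) (shift_ball _ epN) mid.
lra.
Qed.

Lemma ext_BL_nonzero x0 f : ext (ball1 BL) f -> exists x, f x <> 0.
Proof.
move=> fext; apply: contrapT => nz.
have f0 x : f x = 0 by apply: contrapT => fx; apply: nz; exists x.
have half1 : `|2^-1| <= 1 :> R by rewrite ger0_norm ?invr_ge0 ?invf_le1 ?ler1n.
have half2 : `|- 2^-1| <= 1 :> R by rewrite normrN.
have mid x : f x = (2^-1 + - 2^-1) / 2 by rewrite f0 addrN mul0r.
have /(congr1 (fun F => F x0)) /= := ext_midpoint fext (ball1_const _ half1) (ball1_const _ half2) mid.
by move/eqP; rewrite -subr_eq0 opprK -mulr2n mulrn_eq0 invr_eq0 pnatr_eq0.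
Qed.

Lemma ball1_BL_affine K f (a b A : R) : 0 <= K -> lipschitz K f ->
  0 <= a -> 0 <= A -> A + a * K <= 1 -> (forall x, `|a * f x + b| <= A) ->
  ball1 BL (fun x => a * f x + b).
Proof.
move=> K0 fK a0 A0 AK fA; apply: (ball1_BL_of A0 (mulr_ge0 a0 K0) AK fA).
by have := lipschitz_affine a b fK; rewrite ger0_norm.
Qed.

Lemma ext_BL_bnorm x0 f : ext (ball1 BL) f -> supnorm f + lipconst f = 1.
Proof.
move=> fext; have [x1 fx1] := ext_BL_nonzero x0 fext.
have [fBL fb] := fext.1; rewrite /bnorm /= in fb.
have [s0 l0] := (supnorm_ge0 fBL, lipconst_ge0 fBL).
apply/eqP; rewrite eq_le fb /= leNgt; apply/negP => lt1.
pose ep := 1 - (supnorm f + lipconst f).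
have [ep0 ep1] : 0 < ep /\ ep <= 1 by rewrite /ep; split; lra.
have scale_ball (a : R) : 0 <= a -> a * (supnorm f + lipconst f) <= 1 ->
    ball1 BL (fun x => a * f x + 0).
  move=> a0 a1.
  apply: (ball1_BL_affine (b := 0) (A := a * supnorm f) l0 (lipconst_lipschitz fBL) a0).
  - exact: mulr_ge0.
  - by rewrite -mulrDr.
  - by move=> x; rewrite addr0 normrM ger0_norm // ler_wpM2l ?ler_supnorm.
have up : (1 + ep) * (supnorm f + lipconst f) <= 1 by rewrite /ep; nra.
have down : (1 - ep) * (supnorm f + lipconst f) <= 1 by rewrite /ep; nra.
have [p0 m0] : 0 <= 1 + ep /\ 0 <= 1 - ep by split; lra.
have mid x : f x = ((1 + ep) * f x + 0 + ((1 - ep) * f x + 0)) / 2 by field.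
have := ext_midpoint fext (scale_ball _ p0 up) (scale_ball _ m0 down) mid.
move=> /(congr1 (fun F => F x1)) /= /eqP; rewrite -subr_eq0.
have -> : (1 + ep) * f x1 + 0 - ((1 - ep) * f x1 + 0) = (2 * ep) * f x1 by ring.
by rewrite mulf_eq0 => /orP[/eqP|/eqP /fx1 //]; lra.
Qed.

Lemma ext_BL_inf f : ext (ball1 BL) f -> (exists x, f x <> 1) ->
  forall eta, 0 < eta -> exists x, f x < - supnorm f + eta.
Proof.
move=> fext [x1 fx1] eta eta0; apply: contrapT => nox.
have low x : - supnorm f + eta <= f x by rewrite leNgt; apply/negP => fx; apply: nox; exists x.
have n1 := ext_BL_bnorm x1 fext; have fBL := fext.1.1.
set s := supnorm f in n1 low *.
have [s0 l0] := (supnorm_ge0 fBL, lipconst_ge0 fBL).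
have fL : lipschitz (1 - s) f by rewrite -n1 addrAC subrr add0r; exact: lipconst_lipschitz.
have sf x : - s <= f x <= s by rewrite -ler_norml ler_supnorm.
have eta2s : eta <= 2 * s by have := low x1; have := sf x1; lra.
pose ep := eta / 4.
have ep0 : 0 < ep by rewrite divr_gt0.
have eta_ep : eta = 4 * ep by rewrite /ep; field.
have s1' : 0 <= 1 - s by lra.
have gb : ball1 BL (fun x => (1 + ep) * f x + - ep).
  apply: (ball1_BL_affine (A := s - ep * (1 - s))) s1' fL _ _ _ _.
  - by rewrite addr_ge0 // ltW.
  - suff : ep * (1 - s) <= ep by lra.
    by apply: ler_piMr; rewrite ?gerBl // ltW.
  - lra.
  - move=> x; have /andP[? ?] := sf x; have := low x; rewrite ler_norml => ?.
    have : 0 <= (1 + ep) * (s - f x) by rewrite mulr_ge0 ?subr_ge0 //; lra.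
    have : 0 <= (1 + ep) * (f x - (- s + eta)) by rewrite mulr_ge0 ?subr_ge0 //; lra.
    by move=> ? ?; apply/andP; split; nra.
have hb : ball1 BL (fun x => (1 - ep) * f x + ep).
  apply: (ball1_BL_affine (A := s + ep * (1 - s))) s1' fL _ _ _ _.
  - by rewrite subr_ge0; lra.
  - by rewrite addr_ge0 ?mulr_ge0 //; lra.
  - lra.
  - move=> x; have /andP[? ?] := sf x; have := low x; rewrite ler_norml => ?.
    have : 0 <= (1 - ep) * (s - f x) by rewrite mulr_ge0 ?subr_ge0 //; lra.
    have : 0 <= (1 - ep) * (f x + s) by rewrite mulr_ge0 //; lra.
    have : 0 <= ep * (1 - s) by rewrite mulr_ge0 //; lra.
    by move=> ? ? ?; apply/andP; split; nra.
have mid x : f x = ((1 + ep) * f x + - ep + ((1 - ep) * f x + ep)) / 2 by field.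
have /(congr1 (fun F => F x1)) /= /eqP := ext_midpoint fext gb hb mid.
rewrite -subr_eq0.
have -> : (1 + ep) * f x1 + - ep - ((1 - ep) * f x1 + ep) = (2 * ep) * (f x1 - 1) by ring.
by rewrite mulf_eq0 subr_eq0 => /orP[/eqP|/eqP /fx1 //]; lra.
Qed.

Lemma ext_BL_sup f : ext (ball1 BL) f -> (exists x, f x <> - 1) ->
  forall eta, 0 < eta -> exists x, supnorm f - eta < f x.
Proof.
move=> /extN fext [x1 fx1] eta eta0.
have [|x fx] := ext_BL_inf fext _ eta0; last by exists x; move: fx; rewrite supnormN; lra.
by exists x1 => /(congr1 (fun r => - r)); rewrite opprK.
Qed.

Lemma In_enum (T : finType) (x : T) : List.In x (enum T).
Proof.
have : x \in enum T by rewrite mem_enum.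
by elim: (enum T) => //= y s IH; rewrite inE => /orP[/eqP ->|/IH]; [left|right].
Qed.

(* [S] has no decidable equality, so finite sets of points are lists with [List.In]. *)
Definition approximable (A : set (S -> R)) f := forall (l : seq S) (eta : R), 0 < eta ->
  exists2 g, A g & forall q, List.In q l -> `|g q - f q| <= eta.

Lemma inX_local_bound k phi e : inX k phi -> 0 < e ->
  exists (l : seq S) (K : R), 0 <= K /\ forall g h eta, ball1 k g -> ball1 k h ->
    (forall q, List.In q l -> `|g q - h q| <= eta) -> `|phi g - phi h| <= e + K * eta.
Proof.
move=> phiX e0; have e2 : 0 < e / 2 by rewrite divr_gt0.
have [m [a [p phi_ap]]] := phiX _ e2.
exists (List.map p (enum 'I_m)), (\sum_(j < m) `|a j|).
split=> [|g h eta [gBL gb] [hBL hb] gh]; first by rewrite sumr_ge0.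
have sum_gh : `|\sum_(j < m) a j * g (p j) - \sum_(j < m) a j * h (p j)|
    <= (\sum_(j < m) `|a j|) * eta.
  rewrite -sumrB mulr_suml; apply: le_trans (ler_norm_sum _ _ _) _.
  apply: ler_sum => j _; rewrite -mulrBr normrM ler_wpM2l // gh //.
  exact/List.in_map/In_enum.
have e2b (b : R) : b <= 1 -> e / 2 * b <= e / 2 by move=> /(ler_piMr (ltW e2)).
have := phi_ap g gBL; have := phi_ap h hBL; have := e2b _ gb; have := e2b _ hb.
set Sg := \sum_(j < m) _ * g _ in sum_gh *; set Sh := \sum_(j < m) _ * h _ in sum_gh *.
move=> ? ? ? ?; have := ler_distD Sg (phi g) Sh; have := ler_distD Sh (phi g) (phi h).
rewrite (distrC (phi g)) (distrC Sh (phi h)); lra.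
Qed.

Lemma wstar_closure_of_approximable k A f :
  A `<=` ball1 k -> ball1 k f -> approximable A f -> wstar_closure k A f.
Proof.
move=> Ab fb fapp; split=> [|n phi phiX e e0]; first exact: fb.1.
have e2 : 0 < e / 2 by rewrite divr_gt0.
have /choice [LK LKP] : forall i, exists lK : seq S * R, 0 <= lK.2 /\
    forall g h eta, ball1 k g -> ball1 k h ->
      (forall q, List.In q lK.1 -> `|g q - h q| <= eta) ->
      `|phi i g - phi i h| <= e / 2 + lK.2 * eta.
  by move=> i; have [l [K lK]] := inX_local_bound (phiX i) e2; exists (l, K).
pose K := \sum_(i < n) (LK i).2.
have KiK i : (LK i).2 <= K.
  by rewrite /K (bigD1 i) //= lerDl sumr_ge0 // => j _; case: (LKP j).
have K0 : 0 <= K by apply: sumr_ge0 => i _; case: (LKP i).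
pose eta := e / 2 / (K + 1).
have eta0 : 0 < eta by rewrite divr_gt0 //; lra.
have [g Ag gf] := fapp (List.flat_map (fun i => (LK i).1) (enum 'I_n)) eta eta0.
exists g; split=> // i; have [_ bound] := LKP i.
apply: le_lt_trans (bound g f eta (Ab g Ag) fb _) _.
  by move=> q qi; apply: gf; apply/List.in_flat_map; exists i; split=> //; exact: In_enum.
have : (LK i).2 * eta <= K * eta by rewrite ler_wpM2r // ltW.
have : K * eta < e / 2 by rewrite /eta mulrA ltr_pdivrMr; lra.
lra.
Qed.

Lemma approximableS (A B : set (S -> R)) f :
  A `<=` B -> approximable A f -> approximable B f.
Proof. by move=> AB fA l eta /(fA l) [g /AB Bg gf]; exists g. Qed.

Lemma approximable_refl (A : set (S -> R)) f : A f -> approximable A f.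
Proof. by move=> Af l eta eta0; exists f => // q _; rewrite subrr normr0 ltW. Qed.

Lemma nth_cover (x0 : S) (l : seq S) q : List.In q (x0 :: l) ->
  exists i : 'I_(length l).+1, List.nth i (x0 :: l) x0 = q.
Proof.
move=> /(List.In_nth _ _ x0) [i [/ssrnat.ltP il <-]].
by exists (Ordinal il).
Qed.

Lemma J_FM_opp g : J_FM g -> J_FM (fun x => - g x).
Proof.
move=> [gb [g1 [n [P gP]]]]; split; first exact: ball1N.
split; first by rewrite supnormN.
exists n, P => x; rewrite /Mset /= normrN supnormN => /gP [i gxi].
by exists i; rewrite -opprD normrN.
Qed.

Lemma supnorm_approx_signed x0 f : isBL f ->
  (forall eta, 0 < eta -> exists x, supnorm f - eta < f x) \/
  (forall eta, 0 < eta -> exists x, supnorm f - eta < - f x).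
Proof.
move=> fBL; apply: contrapT => /not_orP[/existsNP[e1 /not_implyP[e10 /forallNP f1]]].
move=> /existsNP[e2 /not_implyP[e20 /forallNP f2]].
have m0 : 0 < Num.min e1 e2 by rewrite lt_min e10 e20.
have [m1 m2] : Num.min e1 e2 <= e1 /\ Num.min e1 e2 <= e2 by rewrite !ge_min !lexx orbT.
have [x fx] := supnorm_approx x0 fBL m0.
have [fx0|fx0] := lerP 0 (f x).
  by apply: (f1 x); move: fx; rewrite ger0_norm //; lra.
by apply: (f2 x); move: fx; rewrite ltr0_norm //; lra.
Qed.

Lemma approximable_J_FM_of_sup x0 f : ball1 FM f ->
  (forall eta, 0 < eta -> exists x, 1 - eta < f x) -> approximable J_FM f.
Proof.
move=> fb fsup l eta eta0; have [f1 fL] := proj1 (ball1_FMP f) fb.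
pose P (i : 'I_(length l).+1) := List.nth i (x0 :: l) x0.
pose G := mcshane_clamped 1 1 f P.
exists G.
  apply: (J_FM_of (P := P)).
  - exact: mcshane_clamped_norm_le.
  - exact: mcshane_clamped_lipschitz.
  - move=> e /fsup [x fx]; exists x.
    by move: (ler_mcshane_clamped P ler01 fL f1 x) (ler_norm (G x)); rewrite -/G; lra.
  - by move=> x /(mcshane_clamped_slope ler01 ler01 fL f1) [i Gi]; exists i; rewrite Gi mul1r.
move=> q lq; have [i <-] := nth_cover (x0 := x0) (or_intror lq).
by rewrite -/(P i) /G mcshane_clamped_P // subrr normr0 ltW.
Qed.

Lemma ext_FM_approximable x0 f : ext (ball1 FM) f -> approximable J_FM f.
Proof.
move=> fext; have s1 := ext_FM_supnorm x0 fext.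
have [fsup|fsup] := supnorm_approx_signed x0 fext.1.1; rewrite s1 in fsup.
  exact: approximable_J_FM_of_sup fext.1 fsup.
move=> l eta /(approximable_J_FM_of_sup x0 (ball1N fext.1) fsup l) [g Jg gf].
exists (fun x => - g x); first exact: J_FM_opp.
by move=> q /gf; rewrite -opprD normrN opprK.
Qed.

Lemma approximable_Jhat_BL f : mconnected -> ext (ball1 BL) f ->
  (exists x, f x <> 1) -> (exists x, f x <> - 1) -> approximable Jhat_BL f.
Proof.
move=> Sconn fext f_not1 f_notm1 l eta eta0.
have [x0 _] := f_not1; have [x1 fx1] := ext_BL_nonzero x0 fext.
have n1 := ext_BL_bnorm x1 fext; have fBL := fext.1.1.
have [s0 l0] := (supnorm_ge0 fBL, lipconst_ge0 fBL).
set s := supnorm f in n1 s0 *.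
have fL : lipschitz (1 - s) f by rewrite -n1 addrAC subrr add0r; exact: lipconst_lipschitz.
have sp : 0 < s by apply: lt_le_trans (ler_supnorm x1 fBL); rewrite normr_gt0; exact/eqP.
(* [f] only approaches [s] and [-s]; truncated at [s' < s] it attains [s'] and [-s'],
   and its Lipschitz bound [1 - s] leaves room for [1 - s']. *)
pose et := Num.min (s / 2) eta.
have [et0 et_s et_eta] : [/\ 0 < et, et <= s / 2 & et <= eta].
  by split; rewrite ?lt_min ?ge_min ?lexx ?orbT ?eta0 ?divr_gt0.
pose s' := s - et.
have [s'0 s'1] : 0 < s' /\ s' <= 1 by rewrite /s'; split; lra.
have [L0 c0] : 0 <= 1 - s' /\ 0 <= s' by split; lra.
pose f' x := clamp s' (f x).
have f'L : lipschitz (1 - s') f'.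
  move=> x y; apply: le_trans (clamp_dist _ _ c0) _.
  by apply: le_trans (fL x y) _; rewrite ler_wpM2r ?mdist_ge0 // /s'; lra.
have f's x : `|f' x| <= s' by exact: clamp_norm_le.
have [xp fxp] := ext_BL_sup fext f_notm1 et0.
have [xm fxm] := ext_BL_inf fext f_not1 et0.
rewrite -/s in fxp fxm.
pose P (i : 'I_(length (xm :: l)).+1) := List.nth i (xp :: xm :: l) xp.
pose G := mcshane_clamped (1 - s') s' f' P.
have GP q : List.In q (xp :: xm :: l) -> G q = f' q.
  by move=> /nth_cover [i <-]; rewrite -/(P i) /G mcshane_clamped_P.
exists G.
  apply: (Jhat_BL_of (P := P)) => //.
  - by apply/andP; split; [exact: s'0|exact: s'1].
  - by move=> x; exact: mcshane_clamped_norm_le.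
  - exact: mcshane_clamped_lipschitz L0 c0.
  - by exists xp; rewrite GP /=; [apply: clamp_top c0 _; rewrite /s'; lra|left].
  - by exists xm; rewrite GP /=; [apply: clamp_bot c0 _; rewrite /s'; lra|right; left].
  - exact: mcshane_clamped_slope L0 c0 f'L f's.
move=> q lq; rewrite GP /=; last by right; right.
apply: le_trans et_eta; apply: clamp_near c0 (ltW et0) _.
by rewrite /s' subrK; exact: ler_supnorm.
Qed.

Lemma ext_BL_approximable f : mconnected -> ext (ball1 BL) f -> approximable J_BL f.
Proof.
move=> Sconn fext.
have [f1|/existsNP [x1 fx1]] := pselect (forall x, f x = 1).
  by apply: approximable_refl; left; apply: funext.
have [fm1|/existsNP [x2 fx2]] := pselect (forall x, f x = - 1).
  by apply: approximable_refl; right; left; apply: funext.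
apply: approximableS (approximable_Jhat_BL Sconn fext _ _); last by exists x2.
  by move=> g Jg; right; right.
by exists x1.
Qed.

End ExtremePoints.

Theorem corollary5p7 (R : realType) (S : metric_space R) (k : norm_kind) :
  mconnected S ->
  @Jset R S k `<=` ext (@ball1 R S k) /\
  ext (@ball1 R S k) `<=` wstar_closure k (@Jset R S k).
Proof.
move=> Sconn; split=> [|f fext]; first exact: Jset_ext.
have [[x0 _] _] := Sconn.
apply: wstar_closure_of_approximable fext.1 _.
  by move=> g /(Jset_ext Sconn) [].
by case: k fext => fext; [exact: (ext_FM_approximable x0 fext)|exact: (ext_BL_approximable Sconn fext)].
Qed.
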